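(* Let $Q$ be an $ADE$ Dynkin type quiver and $\mathcal{E}$ an exact structure on $\operatorname{rep}(Q)$. Let $T,T'\in\operatorname{Tilt}(Q)$. If $T'\approx_{\mathcal{E}}T$, then $\operatorname{GS}_{\mathcal{E}}(T')=\operatorname{GS}_{\mathcal{E}}(T)$.
   Context: $Q$ is a quiver whose underlying graph is a Dynkin diagram of type $A_n$, $D_n$ ($n\ge4$), $E_6$, $E_7$ or $E_8$; $\operatorname{rep}(Q)$ is the (hereditary, abelian) category of finite-dimensional representations over an algebraically closed field. Subcategories are full and additive (closed under finite sums and summands). An exact structure $\mathcal{E}$ is a class of short exact sequences closed under isomorphism, containing split sequences, whose $\mathcal{E}$-monomorphisms and $\mathcal{E}$-epimorphisms are closed under composition, and closed under pushouts and pullbacks along arbitrary morphisms. $\operatorname{Gen}_{\mathcal{E}}(\mathscr{C})$: additively generated by cokernels of $\mathcal{E}$-monomorphisms $X\to Y$ with $Y\in\mathscr{C}$; $\operatorname{Sub}_{\mathcal{E}}(\mathscr{C})$: additively generated by kernels of $\mathcal{E}$-epimorphisms $Y\to X$ with $Y\in\mathscr{C}$; $\operatorname{GS}^0_{\mathcal{E}}(\mathscr{C})=\mathscr{C}$, $\operatorname{GS}^i_{\mathcal{E}}(\mathscr{C})$ additively generated by $\operatorname{Gen}_{\mathcal{E}}(\operatorname{GS}^{i-1}_{\mathcal{E}}(\mathscr{C}))\cup\operatorname{Sub}_{\mathcal{E}}(\operatorname{GS}^{i-1}_{\mathcal{E}}(\mathscr{C}))$, $\operatorname{GS}_{\mathcal{E}}(\mathscr{C})=\bigcup_i\operatorname{GS}^i_{\mathcal{E}}(\mathscr{C})$,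 $\operatorname{GS}_{\mathcal{E}}(T)=\operatorname{GS}_{\mathcal{E}}(\operatorname{add}T)$. $\operatorname{Tilt}(Q)$ is the set of isomorphism classes of tilting representations ($\operatorname{Ext}^1(T,T)=0$ and each projective $P$ fits in $0\to P\to T_0\to T_1\to0$ with $T_i\in\operatorname{add}T$). Approximations: for a subcategory $\mathscr{M}$, a left $\mathscr{M}$-approximation of $X$ is $f:X\to C$, $C\in\mathscr{M}$, through which every map from $X$ to an object of $\mathscr{M}$ factors; minimal if every $\alpha:C\to C$ with $\alpha f=f$ is an isomorphism; a left $(\mathscr{M},\mathcal{E})$-approximation if also $f$ is an $\mathcal{E}$-monomorphism; right versions $g:C\to X$ are dual ($g\beta=g$, $g$ an $\mathcal{E}$-epimorphism). For $T\in\operatorname{Tilt}(Q)$ and indecomposable $U$: if $U$ is a summand, $T=\widetilde T\oplus U$, and $U$ has a minimal left $(\operatorname{add}\widetilde T,\mathcal{E})$-approximation $f$, then $T$ admits a left $\mathcal{E}$-mutation at $U$ and $\mu^-_{U,\mathcal{E}}(T)=\widetilde T\oplus\operatorname{Coker}f$; if $U$ has a minimal right $(\operatorname{add}\widetilde T,\mathcal{E})$-approximation $g$, $T$ admits a right $\mathcal{E}$-mutation and $\mu^+_{U,\mathcal{E}}(T)=\widetilde T\oplus\operatorname{Ker}g$ (at most one of these occurs). $\mu_{U,\mathcal{E}}(T)$ is $\mu^-_{U,\mathcal{E}}(T)$, resp. $\mu^+_{U,\mathcal{E}}(T)$, if the corresponding mutation exists, and $T$ otherwise. $T\approx_{\mathcal{E}}T'$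 iff $T'\cong\mu_{U_m,\mathcal{E}}\circ\cdots\circ\mu_{U_1,\mathcal{E}}(T)$ for some indecomposables $U_1,\dots,U_m$ ($m\ge0$). *)

(* Finite-dimensional representations of a finite quiver
   over a field, encoded concretely by matrices (row-vector convention:
   a linear map V -> W is a matrix M acting by v |-> v *m M). *)
From HB Require Import structures.
From mathcomp Require Import all_boot all_order all_algebra.
Set Implicit Arguments. Unset Strict Implicit. Unset Printing Implicit Defensive.
Import GRing.Theory.
Local Open Scope ring_scope.

Record quiver := Quiver {
  nv : nat;
  na : nat;
  src : 'I_na -> 'I_nv;
  tgt : 'I_na -> 'I_nv }.

Inductive dynkin_type := TypeA | TypeD | TypeE.

Definition dynkin_valid (t : dynkin_type) (n : nat) : bool :=
  match t with
  | TypeA => (1 <= n)%N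
  | TypeD => (4 <= n)%N
  | TypeE => (n == 6%N) || (n == 7%N) || (n == 8%N)
  end.

(* adjacency of the Dynkin diagram on vertices 0..n-1:
   A_n : path 0 - 1 - ... - (n-1)
   D_n : path 0 - ... - (n-2), plus the edge {n-3, n-1}
   E_n : path 0 - ... - (n-2), plus the edge {2, n-1}           *)
Definition path_adj (m i j : nat) : bool :=
  ((i.+1 == j) && (j < m)%N) || ((j.+1 == i) && (i < m)%N).

Definition dynkin_adj (t : dynkin_type) (n : nat) (i j : 'I_n) : bool :=
  match t with
  | TypeA => path_adj n i j
  | TypeD => path_adj n.-1 i j
             || ((i == (n - 3)%N :> nat) && (j == n.-1 :> nat))
             || ((j == (n - 3)%N :> nat) && (i == n.-1 :> nat))
  | TypeE => path_adj n.-1 i j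
             || ((i == 2%N :> nat) && (j == n.-1 :> nat))
             || ((j == 2%N :> nat) && (i == n.-1 :> nat))
  end.

(* the underlying (multi)graph of Q is isomorphic to a Dynkin diagram of
   type A_n, D_n (n >= 4), E_6, E_7, E_8: for every pair of vertices, the
   number of arrows between them (in either direction) is 1 if the
   corresponding vertices are adjacent in the diagram and 0 otherwise. *)
Definition ADE_quiver (Q : quiver) : Prop :=
  exists (t : dynkin_type) (n : nat), dynkin_valid t n /\
  exists sigma : 'I_(nv Q) -> 'I_n, bijective sigma /\
    forall i j : 'I_(nv Q),
      #|[pred a : 'I_(na Q) | ((src a == i) && (tgt a == j))
                              || ((src a == j) && (tgt a == i))]|
      = nat_of_bool (dynkin_adj t (sigma i) (sigma j)).

Section Reps.
Variable F : fieldType.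
Variable Q : quiver.

Record rep := Rep {
  rdim : 'I_(nv Q) -> nat;
  rmap : forall a : 'I_(na Q), 'M[F]_(rdim (src a), rdim (tgt a)) }.

Record hom (X Y : rep) := Hom {
  hmat : forall i : 'I_(nv Q), 'M[F]_(rdim X i, rdim Y i);
  hcomm : forall a : 'I_(na Q),
      rmap X a *m hmat (tgt a) = hmat (src a) *m rmap Y a }.

Definition heq (X Y : rep) (f g : hom X Y) : Prop :=
  forall i, hmat f i = hmat g i.

Lemma hcomp_comm (X Y Z : rep) (f : hom X Y) (g : hom Y Z) (a : 'I_(na Q)) :
  rmap X a *m (hmat f (tgt a) *m hmat g (tgt a))
  = (hmat f (src a) *m hmat g (src a)) *m rmap Z a.
Proof. by rewrite mulmxA hcomm -!mulmxA hcomm. Qed.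

(* composition, written in diagrammatic order: first f, then g *)
Definition hcomp (X Y Z : rep) (f : hom X Y) (g : hom Y Z) : hom X Z :=
  @Hom X Z (fun i => hmat f i *m hmat g i) (hcomp_comm f g).

Lemma hid_comm (X : rep) (a : 'I_(na Q)) :
  rmap X a *m 1%:M = 1%:M *m rmap X a.
Proof. by rewrite mulmx1 mul1mx. Qed.

Definition hid (X : rep) : hom X X := @Hom X X (fun i => 1%:M) (@hid_comm X).

Definition is_iso_hom (X Y : rep) (f : hom X Y) : Prop :=
  exists g : hom Y X, heq (hcomp f g) (hid X) /\ heq (hcomp g f) (hid Y).

Definition iso (X Y : rep) : Prop := exists f : hom X Y, is_iso_hom f.

Definition zrep : rep := @Rep (fun _ => 0%N) (fun a => 0).

Definition dsum (X Y : rep) : rep :=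
  @Rep (fun i => (rdim X i + rdim Y i)%N)
       (fun a => block_mx (rmap X a) 0 0 (rmap Y a)).

Definition bigdsum (s : seq rep) : rep := foldr dsum zrep s.

Definition is_zero (X : rep) : Prop := forall i, rdim X i = 0%N.

Definition indec (X : rep) : Prop :=
  ~ is_zero X /\ forall A B : rep, iso X (dsum A B) -> is_zero A \/ is_zero B.

Definition is_summand (X Y : rep) : Prop :=
  exists (s : hom X Y) (r : hom Y X), heq (hcomp s r) (hid X).

Fixpoint all_in (P : rep -> Prop) (s : seq rep) : Prop :=
  match s with nil => True | y :: s' => P y /\ all_in P s' end.

Definition add (P : rep -> Prop) (X : rep) : Prop :=
  exists s : seq rep, all_in P s /\ is_summand X (bigdsum s).

Definition addT (T : rep) : rep -> Prop := add (fun Y => Y = T).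

Record ses := Ses {
  sX : rep; sY : rep; sZ : rep;
  sf : hom sX sY; sg : hom sY sZ }.

Definition exact_pair (X Y Z : rep) (f : hom X Y) (g : hom Y Z) : Prop :=
  forall i, [/\ row_free (hmat f i), row_full (hmat g i)
              & (hmat f i == kermx (hmat g i))%MS].

Definition exact (s : ses) : Prop := exact_pair (sf s) (sg s).

Definition split_ses (s : ses) : Prop :=
  exact s /\ exists r : hom (sY s) (sX s), heq (hcomp (sf s) r) (hid _).

Definition ses_iso (s s' : ses) : Prop :=
  exists (a : hom (sX s) (sX s')) (b : hom (sY s) (sY s'))
         (c : hom (sZ s) (sZ s')),
    [/\ is_iso_hom a, is_iso_hom b, is_iso_hom c,
        heq (hcomp (sf s) b) (hcomp a (sf s'))
      & heq (hcomp (sg s) c) (hcomp b (sg s'))].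

Section Exact.
Variable E : ses -> Prop.

Definition E_mono (X Y : rep) (f : hom X Y) : Prop :=
  exists (Z : rep) (g : hom Y Z), E (Ses f g).
Definition E_epi (Y Z : rep) (g : hom Y Z) : Prop :=
  exists (X : rep) (f : hom X Y), E (Ses f g).

End Exact.

Definition pushout (X Y X' P : rep) (f : hom X Y) (h : hom X X')
    (h' : hom Y P) (f' : hom X' P) : Prop :=
  heq (hcomp f h') (hcomp h f') /\
  forall (W : rep) (u : hom Y W) (v : hom X' W),
    heq (hcomp f u) (hcomp h v) ->
    exists w : hom P W,
      [/\ heq (hcomp h' w) u, heq (hcomp f' w) v
        & forall w' : hom P W, heq (hcomp h' w') u -> heq (hcomp f' w') v ->
            heq w' w].

Definition pullback (Y Z Z' P : rep) (g : hom Y Z) (h : hom Z' Z)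
    (h' : hom P Y) (g' : hom P Z') : Prop :=
  heq (hcomp h' g) (hcomp g' h) /\
  forall (W : rep) (u : hom W Y) (v : hom W Z'),
    heq (hcomp u g) (hcomp v h) ->
    exists w : hom W P,
      [/\ heq (hcomp w h') u, heq (hcomp w g') v
        & forall w' : hom W P, heq (hcomp w' h') u -> heq (hcomp w' g') v ->
            heq w' w].

Definition exact_structure (E : ses -> Prop) : Prop :=
  (forall s, E s -> exact s) /\
  (forall s s', E s -> ses_iso s s' -> E s') /\
  (forall s, split_ses s -> E s) /\
  (forall (X Y Z : rep) (f : hom X Y) (g : hom Y Z),
      E_mono E f -> E_mono E g -> E_mono E (hcomp f g)) /\
  (forall (X Y Z : rep) (f : hom X Y) (g : hom Y Z),
      E_epi E f -> E_epi E g -> E_epi E (hcomp f g)) /\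
  (forall s, E s -> forall (X' P : rep) (h : hom (sX s) X')
      (h' : hom (sY s) P) (f' : hom X' P),
      pushout (sf s) h h' f' -> E_mono E f') /\
  (forall s, E s -> forall (Z' P : rep) (h : hom Z' (sZ s))
      (h' : hom P (sY s)) (g' : hom P Z'),
      pullback (sg s) h h' g' -> E_epi E g').

Definition projective (P : rep) : Prop :=
  forall (Y Z : rep) (g : hom Y Z) (u : hom P Z),
    (forall i, row_full (hmat g i)) -> exists v : hom P Y, heq (hcomp v g) u.

Definition ext1_self_vanish (T : rep) : Prop :=
  forall (Y : rep) (f : hom T Y) (g : hom Y T),
    exact_pair f g -> exists r : hom Y T, heq (hcomp f r) (hid T).

Definition tilting (T : rep) : Prop :=
  ext1_self_vanish T /\
  forall P : rep, projective P ->
    exists (T0 T1 : rep) (f : hom P T0) (g : hom T0 T1),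
      [/\ exact_pair f g, addT T T0 & addT T T1].

Definition left_approx (M : rep -> Prop) (X C : rep) (f : hom X C) : Prop :=
  M C /\ forall (C' : rep) (u : hom X C'), M C' ->
    exists v : hom C C', heq (hcomp f v) u.

Definition left_minimal (X C : rep) (f : hom X C) : Prop :=
  forall alpha : hom C C, heq (hcomp f alpha) f -> is_iso_hom alpha.

Definition right_approx (M : rep -> Prop) (X C : rep) (g : hom C X) : Prop :=
  M C /\ forall (C' : rep) (u : hom C' X), M C' ->
    exists v : hom C' C, heq (hcomp v g) u.

Definition right_minimal (X C : rep) (g : hom C X) : Prop :=
  forall beta : hom C C, heq (hcomp beta g) g -> is_iso_hom beta.

Definition left_mutation (E : ses -> Prop) (T T' : rep) : Prop :=
  exists (U Tt C : rep) (f : hom U C),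
    indec U /\ iso T (dsum Tt U) /\
    left_approx (addT Tt) f /\ left_minimal f /\ E_mono E f /\
    (exists (K : rep) (g : hom C K), exact_pair f g /\ iso T' (dsum Tt K)).

Definition right_mutation (E : ses -> Prop) (T T' : rep) : Prop :=
  exists (U Tt C : rep) (g : hom C U),
    indec U /\ iso T (dsum Tt U) /\
    right_approx (addT Tt) g /\ right_minimal g /\ E_epi E g /\
    (exists (K : rep) (f : hom K C), exact_pair f g /\ iso T' (dsum Tt K)).

(* mut_equiv E T T' : T' is isomorphic to an iterated E-mutation of T
   (the case "mu_{U,E}(T) = T" is subsumed by reflexivity) *)
Inductive mut_equiv (E : ses -> Prop) (T : rep) : rep -> Prop :=
  | me_iso T' : iso T T' -> mut_equiv E T T'
  | me_left T1 T2 : mut_equiv E T T1 -> left_mutation E T1 T2 -> mut_equiv E T T2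
  | me_right T1 T2 : mut_equiv E T T1 -> right_mutation E T1 T2 -> mut_equiv E T T2.

Definition GenE (E : ses -> Prop) (C : rep -> Prop) : rep -> Prop :=
  add (fun Z => exists s : ses, [/\ E s, C (sY s) & sZ s = Z]).

Definition SubE (E : ses -> Prop) (C : rep -> Prop) : rep -> Prop :=
  add (fun K => exists s : ses, [/\ E s, C (sY s) & sX s = K]).

Fixpoint GSi (E : ses -> Prop) (C : rep -> Prop) (i : nat) : rep -> Prop :=
  match i with
  | 0%N => C
  | i'.+1 => add (fun X => GenE E (GSi E C i') X \/ SubE E (GSi E C i') X)
  end.

Definition GS (E : ses -> Prop) (C : rep -> Prop) (X : rep) : Prop :=
  exists i : nat, GSi E C i X.

Definition GST (E : ses -> Prop) (T : rep) : rep -> Prop := GS E (addT T).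

End Reps.

(** [GS_E(C)] is the smallest class containing [C] that is closed under direct
    summands of finite direct sums and under taking the end terms of sequences
    in [E] whose middle term it contains; hence [GS_E(T) = GS_E(T')] as soon as
    each of [T], [T'] lies in [GS_E] of the other.  An [E]-mutation replaces the
    summand [U] of [T = Tt (+) U] by the other end [K] of a sequence in [E]
    whose middle term lies in [add Tt]; since [Tt] lies in both [GS_E(T)] and
    [GS_E(mu(T))], so do [U] and [K], and therefore [T] and [mu(T)]. *)
From Pilot Require Import Defs.
From mathcomp Require Import all_boot all_order all_algebra.
(* Re-imported so that [hom], [Hom] and [add] refer to [Defs], not MathComp. *)
Import Defs.
Set Implicit Arguments. Unset Strict Implicit. Unset Printing Implicit Defensive.
Import GRing.Theory.
Local Open Scope ring_scope.

Section Summands.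
Variables (F : fieldType) (Q : quiver).
Implicit Types X Y Z A B : rep F Q.

Lemma hid_iso X : is_iso_hom (hid X).
Proof. by exists (hid X); split=> i /=; rewrite mulmx1. Qed.

Lemma iso_sym X Y : iso X Y -> iso Y X.
Proof. by move=> [f [g [fg gf]]]; exists g, f. Qed.

Lemma summand_refl X : is_summand X X.
Proof. by exists (hid X), (hid X) => i /=; rewrite mulmx1. Qed.

Lemma summand_trans X Y Z : is_summand X Y -> is_summand Y Z -> is_summand X Z.
Proof.
move=> [s1 [r1 sr1]] [s2 [r2 sr2]]; exists (hcomp s1 s2), (hcomp r2 r1) => i /=.
move: (sr1 i) (sr2 i) => /= sr1i sr2i.
by rewrite mulmxA -(mulmxA (hmat s1 i)) sr2i mulmx1 sr1i.
Qed.

Lemma summand_iso X Y : iso X Y -> is_summand X Y.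
Proof. by move=> [f [g [fg _]]]; exists f, g. Qed.

Lemma dsum_inl_comm A B a :
  rmap A a *m row_mx 1%:M 0 = row_mx 1%:M 0 *m rmap (dsum A B) a.
Proof. by rewrite mul_row_block !mul1mx !mul0mx !addr0 mul_mx_row mulmx1 mulmx0. Qed.

Lemma dsum_outl_comm A B a :
  rmap (dsum A B) a *m col_mx 1%:M 0 = col_mx 1%:M 0 *m rmap A a.
Proof. by rewrite mul_block_col !mulmx1 !mulmx0 !addr0 mul_col_mx mul1mx mul0mx. Qed.

Definition dsum_inl A B : hom A (dsum A B) :=
  @Hom _ _ A (dsum A B) (fun i => row_mx 1%:M 0) (@dsum_inl_comm A B).

Definition dsum_outl A B : hom (dsum A B) A :=
  @Hom _ _ (dsum A B) A (fun i => col_mx 1%:M 0) (@dsum_outl_comm A B).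

Lemma summand_dsuml A B : is_summand A (dsum A B).
Proof.
exists (dsum_inl A B), (dsum_outl A B) => i /=.
by rewrite mul_row_col mulmx1 mulmx0 addr0.
Qed.

Lemma dsum_hom_comm A B A' B' (f : hom A A') (g : hom B B') a :
  rmap (dsum A B) a *m block_mx (hmat f (tgt a)) 0 0 (hmat g (tgt a))
  = block_mx (hmat f (src a)) 0 0 (hmat g (src a)) *m rmap (dsum A' B') a.
Proof. by rewrite /= !mulmx_block !mulmx0 !mul0mx !addr0 !add0r !hcomm. Qed.

Definition dsum_hom A B A' B' (f : hom A A') (g : hom B B') :
  hom (dsum A B) (dsum A' B') :=
  @Hom _ _ (dsum A B) (dsum A' B') (fun i => block_mx (hmat f i) 0 0 (hmat g i))
    (dsum_hom_comm f g).

Lemma summand_dsum A B A' B' :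
  is_summand A A' -> is_summand B B' -> is_summand (dsum A B) (dsum A' B').
Proof.
move=> [s1 [r1 sr1]] [s2 [r2 sr2]]; exists (dsum_hom s1 s2), (dsum_hom r1 r2) => i /=.
move: (sr1 i) (sr2 i) => /= sr1i sr2i.
by rewrite mulmx_block !mulmx0 !mul0mx !addr0 !add0r sr1i sr2i -scalar_mx_block.
Qed.

Lemma from_zrep_comm X a :
  rmap (zrep F Q) a *m (0 : 'M_(0, _)) = 0 *m rmap X a.
Proof. by rewrite mulmx0 mul0mx. Qed.

Lemma to_zrep_comm X a :
  rmap X a *m (0 : 'M_(_, 0)) = 0 *m rmap (zrep F Q) a.
Proof. by rewrite mulmx0 mul0mx. Qed.

Definition from_zrep X : hom (zrep F Q) X :=
  @Hom _ _ (zrep F Q) X (fun i => 0) (@from_zrep_comm X).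

Definition to_zrep X : hom X (zrep F Q) :=
  @Hom _ _ X (zrep F Q) (fun i => 0) (@to_zrep_comm X).

Lemma split_ses_trivial X : split_ses (Ses (from_zrep X) (hid X)).
Proof.
split; last by exists (to_zrep X) => i; apply/matrixP => -[].
move=> i /=; split; first by rewrite /row_free mxrank0.
  by rewrite -sub1mx submx1.
have /eqP -> : kermx (1%:M : 'M[F]_(rdim X i)) == 0.
  by rewrite kermx_eq0 row_free_unit unitmx1.
by rewrite !sub0mx.
Qed.

End Summands.

Section Factorisation.
Variables (F : fieldType) (Q : quiver).
Implicit Types X Y Z : rep F Q.

Lemma mulmx_pinv_kermx m n p (A : 'M[F]_(m, n)) (B : 'M_(m, p)) :
  (kermx A <= kermx B)%MS -> A *m (pinvmx A *m B) = B.
Proof.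
move=> kerAB; have : (A *m pinvmx A - 1%:M <= kermx B)%MS.
  apply: submx_trans kerAB; apply/sub_kermxP.
  by rewrite mulmxBl mulmxKpV // mul1mx subrr.
by move/sub_kermxP/eqP; rewrite mulmxBl mul1mx subr_eq0 mulmxA => /eqP.
Qed.

Lemma factor_row_full_comm Y Z Z' (g0 : hom Y Z) (g : hom Y Z')
    (c : forall i, 'M[F]_(rdim Z i, rdim Z' i)) :
  (forall i, row_full (hmat g0 i)) -> (forall i, hmat g0 i *m c i = hmat g i) ->
  forall a, rmap Z a *m c (tgt a) = c (src a) *m rmap Z' a.
Proof.
move=> full0 g0c a; apply: (row_full_inj (full0 (src a))).
by rewrite mulmxA -hcomm -mulmxA g0c hcomm mulmxA g0c.
Qed.

Lemma factor_row_free_comm X X' Y (f0 : hom X Y) (f : hom X' Y)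
    (k : forall i, 'M[F]_(rdim X i, rdim X' i)) :
  (forall i, row_free (hmat f i)) -> (forall i, k i *m hmat f i = hmat f0 i) ->
  forall a, rmap X a *m k (tgt a) = k (src a) *m rmap X' a.
Proof.
move=> free kf a; apply: (row_free_inj (free (tgt a))).
by rewrite -mulmxA kf hcomm -[RHS]mulmxA hcomm mulmxA kf.
Qed.

Lemma coker_factor Y Z Z' (g0 : hom Y Z) (g : hom Y Z') :
  (forall i, row_full (hmat g0 i)) ->
  (forall i, (kermx (hmat g0 i) <= kermx (hmat g i))%MS) ->
  exists c : hom Z Z', heq (hcomp g0 c) g.
Proof.
move=> full0 ker0; pose c i := pinvmx (hmat g0 i) *m hmat g i.
have g0c i : hmat g0 i *m c i = hmat g i by exact: mulmx_pinv_kermx.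
by exists (@Hom _ _ Z Z' c (factor_row_full_comm full0 g0c)).
Qed.

Lemma ker_factor X X' Y (f0 : hom X Y) (f : hom X' Y) :
  (forall i, row_free (hmat f i)) -> (forall i, (hmat f0 i <= hmat f i)%MS) ->
  exists k : hom X X', heq (hcomp k f) f0.
Proof.
move=> free f0f; pose k i := hmat f0 i *m pinvmx (hmat f i).
have kf i : k i *m hmat f i = hmat f0 i by exact: mulmxKpV.
by exists (@Hom _ _ X X' k (factor_row_free_comm free kf)).
Qed.

Lemma exact_pair_coker_iso X Y Z Z' (f : hom X Y) (g0 : hom Y Z) (g : hom Y Z') :
  exact_pair f g0 -> exact_pair f g -> ses_iso (Ses f g0) (Ses f g).
Proof.
have ker_le Z1 Z2 (g1 : hom Y Z1) (g2 : hom Y Z2) :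
    exact_pair f g1 -> exact_pair f g2 ->
    forall i, (kermx (hmat g1 i) <= kermx (hmat g2 i))%MS.
  move=> ex1 ex2 i; case: (ex1 i) (ex2 i) => _ _ /andP[_ k1f] [_ _ /andP[fk2 _]].
  exact: submx_trans k1f fk2.
move=> ex0 ex; have full0 i : row_full (hmat g0 i) by case: (ex0 i).
have full i : row_full (hmat g i) by case: (ex i).
have [c g0c] := coker_factor full0 (ker_le _ _ _ _ ex0 ex).
have [d gd] := coker_factor full (ker_le _ _ _ _ ex ex0).
rewrite /heq /= in g0c gd.
exists (hid X), (hid Y), c; split; try exact: hid_iso.
- exists d; split=> i /=.
    by apply: (row_full_inj (full0 i)); rewrite mulmxA g0c gd mulmx1.
  by apply: (row_full_inj (full i)); rewrite mulmxA gd g0c mulmx1.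
- by move=> i /=; rewrite mulmx1 mul1mx.
- by move=> i /=; rewrite mul1mx g0c.
Qed.

Lemma exact_pair_ker_iso X X' Y Z (f0 : hom X Y) (f : hom X' Y) (g : hom Y Z) :
  exact_pair f0 g -> exact_pair f g -> ses_iso (Ses f0 g) (Ses f g).
Proof.
have im_le X1 X2 (f1 : hom X1 Y) (f2 : hom X2 Y) :
    exact_pair f1 g -> exact_pair f2 g -> forall i, (hmat f1 i <= hmat f2 i)%MS.
  move=> ex1 ex2 i; case: (ex1 i) (ex2 i) => _ _ /andP[f1k _] [_ _ /andP[_ kf2]].
  exact: submx_trans f1k kf2.
move=> ex0 ex; have free0 i : row_free (hmat f0 i) by case: (ex0 i).
have free i : row_free (hmat f i) by case: (ex i).
have [k kf] := ker_factor free (im_le _ _ _ _ ex0 ex).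
have [l lf0] := ker_factor free0 (im_le _ _ _ _ ex ex0).
rewrite /heq /= in kf lf0.
exists k, (hid Y), (hid Z); split; try exact: hid_iso.
- exists l; split=> i /=.
    by apply: (row_free_inj (free0 i)); rewrite -mulmxA lf0 kf mul1mx.
  by apply: (row_free_inj (free i)); rewrite -mulmxA kf lf0 mul1mx.
- by move=> i /=; rewrite mulmx1 kf.
- by move=> i /=; rewrite mulmx1 mul1mx.
Qed.

End Factorisation.

Section AdditiveClosure.
Variables (F : fieldType) (Q : quiver).
Implicit Types (X Y : rep F Q) (P R : rep F Q -> Prop).

Lemma all_in_mono P R s : (forall X, P X -> R X) -> all_in P s -> all_in R s.
Proof. by move=> PR; elim: s => //= Y s IHs [PY Ps]; split; auto. Qed.

Lemma add_mono P R X : (forall Y, P Y -> R Y) -> add P X -> add R X.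
Proof. by move=> PR [s [Ps Xs]]; exists s; split=> //; exact: all_in_mono Ps. Qed.

Lemma add_incl P X : P X -> add P X.
Proof. by move=> PX; exists [:: X]; split=> //=; exact: summand_dsuml. Qed.

Lemma add_summand P X Y : is_summand X Y -> add P Y -> add P X.
Proof. by move=> XY [s [Ps Ys]]; exists s; split=> //; exact: summand_trans Ys. Qed.

Lemma add_dsum P X Y : P X -> P Y -> add P (dsum X Y).
Proof.
move=> PX PY; exists [:: X; Y]; split=> //=.
exact: summand_dsum (summand_refl X) (summand_dsuml Y (zrep F Q)).
Qed.

End AdditiveClosure.

Section GenSubClosure.
Variables (F : fieldType) (Q : quiver) (E : ses F Q -> Prop).
Hypothesis HE : exact_structure E.
Implicit Types (X Y : rep F Q) (C D : rep F Q -> Prop).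

Lemma E_exact s : E s -> exact s.
Proof. by case: HE => exactE _; exact: exactE. Qed.

Lemma E_ses_iso s s' : E s -> ses_iso s s' -> E s'.
Proof. by case: HE => _ [isoE _]; exact: isoE. Qed.

Lemma E_split s : split_ses s -> E s.
Proof. by case: HE => _ [_ [splitE _]]; exact: splitE. Qed.

Lemma E_coker X Y Z Z' (f : hom X Y) (g0 : hom Y Z) (g : hom Y Z') :
  E (Ses f g0) -> exact_pair f g -> E (Ses f g).
Proof.
by move=> Efg0 exfg; apply: E_ses_iso Efg0 (exact_pair_coker_iso (E_exact Efg0) exfg).
Qed.

Lemma E_ker X X' Y Z (f0 : hom X Y) (f : hom X' Y) (g : hom Y Z) :
  E (Ses f0 g) -> exact_pair f g -> E (Ses f g).
Proof.
by move=> Ef0g exfg; apply: E_ses_iso Ef0g (exact_pair_ker_iso (E_exact Ef0g) exfg).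
Qed.

Lemma GenE_mono C D X : (forall Y, C Y -> D Y) -> GenE E C X -> GenE E D X.
Proof. by move=> CD; apply: add_mono => Z [s [Es /CD Ds sZ]]; exists s. Qed.

Lemma SubE_mono C D X : (forall Y, C Y -> D Y) -> SubE E C X -> SubE E D X.
Proof. by move=> CD; apply: add_mono => Z [s [Es /CD Ds sX]]; exists s. Qed.

(* [0 -> 0 -> X -> X -> 0] splits, so it lies in every exact structure. *)
Lemma GenE_incl C X : C X -> GenE E C X.
Proof.
by move=> CX; apply: add_incl; exists (Ses (from_zrep X) (hid X)); split;
  [exact/E_split/split_ses_trivial | |].
Qed.

Lemma GSi_succ C i X : GSi E C i X -> GSi E C i.+1 X.
Proof. by move=> CiX; apply: add_incl; left; exact: GenE_incl. Qed.

Lemma GSi_le C i j X : (i <= j)%N -> GSi E C i X -> GSi E C j X.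
Proof. by move=> /subnK <-; elim: (j - i)%N => //= k IHk /IHk /GSi_succ. Qed.

Lemma all_in_GS C s : all_in (GS E C) s -> exists j, all_in (GSi E C j) s.
Proof.
elim: s => [|Y s IHs] /=; first by exists 0%N.
move=> [[i CiY] /IHs [j Cjs]]; exists (maxn i j); split.
  exact: GSi_le (leq_maxl i j) CiY.
by apply: all_in_mono Cjs => Z; apply: GSi_le; exact: leq_maxr.
Qed.

Lemma GS_incl C X : C X -> GS E C X.
Proof. by exists 0%N. Qed.

Lemma GS_add C X : add (GS E C) X -> GS E C X.
Proof.
move=> [s [GSs Xs]]; have [j Cjs] := all_in_GS GSs.
exists j.+1; exists s; split=> //.
by apply: all_in_mono Cjs => Y CjY; left; exact: GenE_incl.
Qed.

Lemma GS_summand C X Y : is_summand X Y -> GS E C Y -> GS E C X.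
Proof. by move=> XY GSY; apply/GS_add/(add_summand XY)/add_incl. Qed.

Lemma GS_dsum C X Y : GS E C X -> GS E C Y -> GS E C (dsum X Y).
Proof. by move=> GSX GSY; apply/GS_add/add_dsum. Qed.

Lemma GS_GenE C X : GenE E (GS E C) X -> GS E C X.
Proof.
move=> GenX; apply: GS_add; move: GenX; apply: add_mono => Z [s [Es [i CiY] sZ]].
by exists i.+1; apply: add_incl; left; apply: add_incl; exists s.
Qed.

Lemma GS_SubE C X : SubE E (GS E C) X -> GS E C X.
Proof.
move=> SubX; apply: GS_add; move: SubX; apply: add_mono => Z [s [Es [i CiY] sX]].
by exists i.+1; apply: add_incl; right; apply: add_incl; exists s.
Qed.

Lemma GS_ses C s : E s -> GS E C (sY s) -> GS E C (sX s) /\ GS E C (sZ s).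
Proof.
move=> Es GSY.
by split; [apply: GS_SubE | apply: GS_GenE]; apply: add_incl; exists s.
Qed.

Lemma GS_min C D X :
  (forall Y, C Y -> D Y) ->
  (forall Y, add (fun Z => GenE E D Z \/ SubE E D Z) Y -> D Y) ->
  GS E C X -> D X.
Proof.
move=> CD closedD [i]; elim: i X => [|i IHi] X /=; first exact: CD.
move=> CiX; apply: closedD; move: CiX; apply: add_mono => Y [GenY | SubY].
  by left; exact: GenE_mono GenY.
by right; exact: SubE_mono SubY.
Qed.

Lemma GS_sub C D X : (forall Y, C Y -> GS E D Y) -> GS E C X -> GS E D X.
Proof.
move=> CD; apply: GS_min => // Y closedY; apply: GS_add; move: closedY.
by apply: add_mono => Z [/GS_GenE | /GS_SubE].
Qed.

End GenSubClosure.

Section Mutation.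
Variables (F : fieldType) (Q : quiver) (E : ses F Q -> Prop).
Hypothesis HE : exact_structure E.
Implicit Types T X : rep F Q.

Lemma GST_self T : GST E T T.
Proof. exact/GS_incl/add_incl. Qed.

Lemma GST_addT T1 T2 X : GST E T1 T2 -> addT T2 X -> GST E T1 X.
Proof. by move=> T12 T2X; apply: (GS_add HE); move: T2X; apply: add_mono => Y ->. Qed.

Lemma GST_summand_dsuml T A B : iso T (dsum A B) -> GST E T A.
Proof.
move=> isoT; apply: (GS_summand HE) (GST_self T).
exact: summand_trans (summand_dsuml A B) (summand_iso (iso_sym isoT)).
Qed.

Lemma GST_eq T1 T2 :
  GST E T1 T2 -> GST E T2 T1 -> forall X, GST E T1 X <-> GST E T2 X.
Proof. by move=> T12 T21 X; split; apply: (GS_sub HE) => Y; apply: GST_addT. Qed.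

Lemma GST_iso T1 T2 : iso T1 T2 -> forall X, GST E T1 X <-> GST E T2 X.
Proof.
move=> iso12; apply: GST_eq; apply: (GS_summand HE) (GST_self _).
  exact: summand_iso (iso_sym iso12).
exact: summand_iso iso12.
Qed.

Lemma GST_exchange Tt T1 T2 s :
  E s -> addT Tt (sY s) ->
  iso T1 (dsum Tt (sX s)) -> iso T2 (dsum Tt (sZ s)) ->
  forall X, GST E T1 X <-> GST E T2 X.
Proof.
move=> Es Ys isoT1 isoT2.
have ends T : GST E T Tt -> GST E T T1 /\ GST E T T2.
  move=> GSTt; have [GSX GSZ] := GS_ses HE Es (GST_addT GSTt Ys).
  split; first exact: (GS_summand HE (summand_iso isoT1) (GS_dsum HE GSTt GSX)).
  exact: (GS_summand HE (summand_iso isoT2) (GS_dsum HE GSTt GSZ)).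
apply: GST_eq.
  exact: (ends T1 (GST_summand_dsuml isoT1)).2.
exact: (ends T2 (GST_summand_dsuml isoT2)).1.
Qed.

Lemma left_mutation_GST T1 T2 :
  left_mutation E T1 T2 -> forall X, GST E T1 X <-> GST E T2 X.
Proof.
move=> [U [Tt [C [f [_ [isoT1 [[addC _] [_ [[Z [g0 Efg0]] [K [g [exfg isoT2]]]]]]]]]]]].
exact: (GST_exchange (s := Ses f g)) (E_coker HE Efg0 exfg) addC isoT1 isoT2.
Qed.

Lemma right_mutation_GST T1 T2 :
  right_mutation E T1 T2 -> forall X, GST E T1 X <-> GST E T2 X.
Proof.
move=> [U [Tt [C [g [_ [isoT1 [[addC _] [_ [[Z [f0 Ef0g]] [K [f [exfg isoT2]]]]]]]]]]]] X.
apply: iff_sym.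
exact: (GST_exchange (s := Ses f g)) (E_ker HE Ef0g exfg) addC isoT2 isoT1 X.
Qed.

End Mutation.

Theorem proposition5p16 (F : closedFieldType) (Q : quiver)
  (HQ : ADE_quiver Q)
  (E : ses F Q -> Prop) (HE : exact_structure E)
  (T T' : rep F Q) (HT : tilting T) (HT' : tilting T')
  (Hequiv : mut_equiv E T' T) :
  forall X : rep F Q, GST E T' X <-> GST E T X.
Proof.
elim: Hequiv => [T0 isoT0 | T1 T2 _ IH mut | T1 T2 _ IH mut] X.
- exact: (GST_iso HE isoT0 X).
- exact: iff_trans (IH X) (left_mutation_GST HE mut X).
- exact: iff_trans (IH X) (right_mutation_GST HE mut X).
Qed.
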